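(* Let $G$ be a torsion-free abelian group and $H$ any group. Then every non-constant $\mathcal{T}\in\mathrm{GCA}(A^G,A^H)$ has the unique homomorphism property.
   Context: $A$ is a finite set with $|A|\ge 2$. $A^G$ is the set of functions $G\to A$ with shift action $(g\cdot x)(k):=x(g^{-1}k)$. For $\phi\in\mathrm{Hom}(H,G)$, a $\phi$-cellular automaton is a map $\mathcal{T}:A^G\to A^H$ for which there exist finite $T\subseteq G$ and $\mu:A^T\to A$ with $\mathcal{T}(x)(h)=\mu((\phi(h^{-1})\cdot x)|_T)$ for all $x,h$; $\mathrm{GCA}(A^G,A^H)$ is the set of all $\phi$-cellular automata $A^G\to A^H$ over all $\phi\in\mathrm{Hom}(H,G)$, and $\mathrm{CA}(A^G)$ is the set of $\mathrm{id}_G$-cellular automata. $\phi^*(x):=x\circ\phi$. $\mathcal{T}\in\mathrm{GCA}(A^G,A^H)$ has the unique homomorphism property (UHP) if $\mathcal{T}=\phi^*\circ\tau=\psi^*\circ\tau$ with $\phi,\psi\in\mathrm{Hom}(H,G)$, $\tau\in\mathrm{CA}(A^G)$ implies $\phi=\psi$ (every $\phi$-cellular automaton can be written as $\phi^*\circ\tau$ for a unique $\tau\in\mathrm{CA}(A^G)$). *)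

(* G : zmodType (additive abelian group), H : groupType
   (general, possibly infinite, group from mathcomp boot/monoid.v). *)
From HB Require Import structures.
From mathcomp Require Import all_boot all_order all_algebra.
Set Implicit Arguments.
Unset Strict Implicit.
Unset Printing Implicit Defensive.
Import GRing.Theory.

Local Open Scope ring_scope.

Definition torsion_free (G : zmodType) : Prop :=
  forall (g : G) (n : nat), (0 < n)%N -> g *+ n = 0 -> g = 0.

Definition is_hom (H : groupType) (G : zmodType) (phi : H -> G) : Prop :=
  forall a b : H, phi (a * b)%g = phi a + phi b.

Definition shift (G : zmodType) (A : Type) (g : G) (x : G -> A) : G -> A :=
  fun k => x (- g + k).

Definition cfg_restr (G : zmodType) (A : Type) (T : seq G) (x : G -> A)
  : {k : G | k \in T} -> A := fun k => x (val k).
Arguments cfg_restr {G A} T x k.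

Definition is_phiCA (H : groupType) (G : zmodType) (A : finType)
  (phi : H -> G) (Tm : (G -> A) -> (H -> A)) : Prop :=
  exists (T : seq G) (mu : ({k : G | k \in T} -> A) -> A),
    forall (x : G -> A) (h : H), Tm x h = mu (cfg_restr T (shift (phi (h^-1)%g) x)).

Definition is_GCA (H : groupType) (G : zmodType) (A : finType)
  (Tm : (G -> A) -> (H -> A)) : Prop :=
  exists phi : H -> G, is_hom phi /\ is_phiCA phi Tm.

(* CA(A^G): the id_G-cellular automata, G viewed as group under + *)
Definition is_CA (G : zmodType) (A : finType) (tau : (G -> A) -> (G -> A)) : Prop :=
  exists (T : seq G) (mu : ({k : G | k \in T} -> A) -> A),
    forall (x : G -> A) (g : G), tau x g = mu (cfg_restr T (shift (- g) x)).

Definition pullback (H : groupType) (G : zmodType) (A : Type) (phi : H -> G)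
  (x : G -> A) : H -> A := x \o phi.

Definition UHP (H : groupType) (G : zmodType) (A : finType)
  (Tm : (G -> A) -> (H -> A)) : Prop :=
  forall (phi psi : H -> G) (tau : (G -> A) -> (G -> A)),
    is_hom phi -> is_hom psi -> is_CA tau ->
    Tm = pullback phi \o tau -> Tm = pullback psi \o tau -> phi = psi.

Definition nonconstant (X Y : Type) (f : X -> Y) : Prop :=
  exists x y : X, f x <> f y.

(** If [phi^* \o tau = psi^* \o tau] and [phi h <> psi h], then, because [tau]
    commutes with translations, every [tau x] is periodic with the nonzero period
    [d = psi h - phi h].  In a torsion-free group the multiples of [d] are
    pairwise distinct, so some [n d] moves the finite window [T] of [tau] off
    itself.  Gluing [x] on [g + T] with [y] on [g + n d + T] into one
    configuration [z] gives [tau x g = tau z g = tau z (g + n d) = tau y g]: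
    [tau], hence [Tm], would be constant. *)
From HB Require Import structures.
From mathcomp Require Import all_boot all_order all_algebra.
From Stdlib Require Import FunctionalExtensionality.
Set Implicit Arguments.
Unset Strict Implicit.
Unset Printing Implicit Defensive.
Import GRing.Theory.
Local Open Scope ring_scope.

Lemma torsion_free_mulrn_inj (G : zmodType) (d : G) :
  torsion_free G -> d != 0 -> injective (fun n : nat => d *+ n).
Proof.
move=> tfG dn0 m n.
wlog lemn : m n / (m <= n)%N.
  by move=> W Emn; case: (leqP m n) => [|/ltnW] h; [|symmetry]; apply: W.
move=> Emn; apply/eqP; rewrite eqn_leq lemn leqNgt; apply/negP => ltmn.
have dnm0 : d *+ (n - m) = 0 by rewrite mulrnBr // Emn subrr.
by move/negP: dn0; apply; rewrite (tfG _ _ _ dnm0) ?subn_gt0.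
Qed.

Lemma torsion_free_translate_out (G : zmodType) (T : seq G) (d : G) :
  torsion_free G -> d != 0 ->
  exists n : nat, forall t, t \in T -> t + d *+ n \notin T.
Proof.
move=> tfG dn0; pose S := [seq t1 - t2 | t1 <- T, t2 <- T].
pose M := [seq d *+ n | n <- iota 0 (size S).+1].
have uniqM : uniq M by rewrite (map_inj_uniq (torsion_free_mulrn_inj tfG dn0)) iota_uniq.
have /allPn[_ /mapP[n _ ->] dnS] : ~~ all (mem S) M.
  apply/negP => /allP /(uniq_leq_size uniqM).
  by rewrite size_map size_iota ltnn.
exists n => t tT; apply: contra dnS => tdT.
apply/allpairsP; exists (t + d *+ n, t).
by rewrite /= tdT tT addrAC subrr add0r.
Qed.

Section CellularAutomaton.

Variables (G : zmodType) (A : finType) (tau : (G -> A) -> (G -> A)).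
Hypothesis tauCA : is_CA tau.

Lemma CA_local : exists T : seq G, forall (x y : G -> A) (g g' : G),
  {in T, forall k, x (g + k) = y (g' + k)} -> tau x g = tau y g'.
Proof.
have [T [mu Emu]] := tauCA; exists T => x y g g' Exy; rewrite !Emu; congr mu.
apply: functional_extensionality => k.
by rewrite /cfg_restr /shift !opprK Exy //; apply: valP.
Qed.

Lemma CA_shift (a : G) (x : G -> A) (g : G) : tau (shift a x) g = tau x (g - a).
Proof.
have [T Tloc] := CA_local; apply: Tloc => k _.
by rewrite /shift addrA [- a + g]addrC.
Qed.

Lemma CA_period (a b : G) : (forall x, tau x a = tau x b) ->
  forall x g, tau x (g + (b - a)) = tau x g.
Proof.
move=> Eab x g; have Etau c : tau x c = tau (shift (a - g) x) (c + (a - g)).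
  by rewrite CA_shift addrK.
by rewrite !Etau addrAC !subrKC.
Qed.

Lemma CA_periodic_const (d : G) : torsion_free G -> d != 0 ->
  (forall x g, tau x (g + d) = tau x g) -> forall x y g, tau x g = tau y g.
Proof.
move=> tfG dn0 per x y g; have [T Tloc] := CA_local.
have perN n z c : tau z (c + d *+ n) = tau z c.
  by elim: n => [|n IHn]; rewrite ?mulr0n ?addr0 // mulrSr addrA per.
have [n Tout] := torsion_free_translate_out T tfG dn0.
pose z k := if k - g \in T then x k else y (k - d *+ n).
have -> : tau x g = tau z g by apply: Tloc => k kT; rewrite /z [g + k]addrC addrK kT.
rewrite -(perN n z g); apply: Tloc => k kT; rewrite /z.
have -> : g + d *+ n + k - g = k + d *+ n.
  by rewrite addrAC [g + _]addrC addrK addrC.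
by rewrite (negbTE (Tout _ kT)) addrAC addrK.
Qed.

End CellularAutomaton.

Theorem corollary3p10 (A : finType) (G : zmodType) (H : groupType) :
  (1 < #|A|)%N -> torsion_free G ->
  forall Tm : (G -> A) -> (H -> A),
    is_GCA Tm -> nonconstant Tm -> UHP Tm.
Proof.
move=> _ tfG Tm _ [x0 [y0 Txy]] phi psi tau _ _ tauCA Ephi Epsi.
apply: functional_extensionality => h; apply/eqP; rewrite eq_sym -subr_eq0.
apply: contraT => dn0; case: Txy.
have Eh x : tau x (phi h) = tau x (psi h).
  by have := congr1 (fun F => F x h) Epsi; rewrite Ephi.
have tau_const := CA_periodic_const tauCA tfG dn0 (CA_period tauCA Eh).
by rewrite Ephi; apply: functional_extensionality => h'; apply: tau_const.
Qed.
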